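(* Let $A$ be a nonempty finite set with $|A|=n$, let $\Sigma\in\mathbb{R}$, and let $d$ be a metric on $A$. Then the function $\sigma:A^2\to\mathbb{R}$ defined by $$\sigma(x,y)=d(x,\cdot)+d(y,\cdot)-d(x,y)-d(\cdot,\cdot)+\frac{\Sigma}{n}$$ is a $\Sigma$-proximity on $A$.
   Context: A metric on $A$ is a function $d:A^2\to\mathbb{R}$ such that for all $x,y,z\in A$: $d(x,y)=0$ iff $x=y$, and $d(x,y)+d(x,z)-d(y,z)\ge 0$. Notation: $d(x,\cdot)=\frac1n\sum_{t\in A}d(x,t)$ and $d(\cdot,\cdot)=\frac1{n^2}\sum_{s,t\in A}d(s,t)$. For a real number $\Sigma$, a function $\sigma:A^2\to\mathbb{R}$ is a $\Sigma$-proximity on $A$ if for all $x,y,z\in A$: (1) $\sum_{t\in A}\sigma(x,t)=\Sigma$; (2) $\sigma(x,y)+\sigma(x,z)-\sigma(y,z)\le\sigma(x,x)$, with strict inequality whenever $z=y$ and $x\ne y$. *)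

From HB Require Import structures.
From mathcomp Require Import all_boot all_order all_algebra.
From mathcomp Require Import reals.
Set Implicit Arguments. Unset Strict Implicit. Unset Printing Implicit Defensive.
Import Order.TTheory GRing.Theory Num.Theory.
Local Open Scope ring_scope.

Definition is_metric (R : realType) (A : finType) (d : A -> A -> R) : Prop :=
  forall x y z : A, (d x y = 0 <-> x = y) /\ 0 <= d x y + d x z - d y z.

Definition drow (R : realType) (A : finType) (d : A -> A -> R) (x : A) : R :=
  (\sum_(t : A) d x t) / #|A|%:R.

Definition dall (R : realType) (A : finType) (d : A -> A -> R) : R :=
  (\sum_(s : A) \sum_(t : A) d s t) / (#|A|%:R ^+ 2).

Definition is_proximity (R : realType) (A : finType) (Sig : R)
    (sigma : A -> A -> R) : Prop :=
  forall x y z : A,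
    \sum_(t : A) sigma x t = Sig /\
    sigma x y + sigma x z - sigma y z <= sigma x x /\
    (z = y -> x <> y -> sigma x y + sigma x z - sigma y z < sigma x x).

From HB Require Import structures.
From mathcomp Require Import all_boot all_order all_algebra.
From mathcomp Require Import reals.
From mathcomp Require Import ring lra.
Import Order.TTheory GRing.Theory Num.Theory.
Set Implicit Arguments.
Local Open Scope ring_scope.

(* In sigma(x,x) - sigma(x,y) - sigma(x,z) + sigma(y,z) every averaged term
   cancels, leaving the triangle defect d(x,y) + d(x,z) - d(y,z) - d(x,x); it is
   nonnegative for a metric, and equals 2 d(x,y) > 0 when z = y <> x.  The row
   sums equal Sigma because n d(x,.) is the x-row sum of d and the average of
   the d(t,.) is d(.,.). *)

Section MetricProximity.

Context {R : realType} {A : finType} (d : A -> A -> R).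

Definition metric_proximity (Sig : R) (x y : A) : R :=
  drow d x + drow d y - d x y - dall d + Sig / #|A|%:R.

Lemma metric_proximity_defect (Sig : R) (x y z : A) :
  let sigma := metric_proximity Sig in
  sigma x x - (sigma x y + sigma x z - sigma y z)
  = d x y + d x z - d y z - d x x.
Proof. by rewrite /= /metric_proximity; ring. Qed.

Lemma sum_drow : \sum_(x : A) drow d x = #|A|%:R * dall d.
Proof.
rewrite /drow /dall -mulr_suml.
have [->|n0] := eqVneq (#|A|%:R : R) 0; first by rewrite invr0 !mul0r mulr0.
by field.
Qed.

Lemma mulr_drow (x : A) :
  #|A|%:R != 0 :> R -> #|A|%:R * drow d x = \sum_(t : A) d x t.
Proof. by move=> n0; rewrite /drow mulrC divfK. Qed.

Lemma sum_metric_proximity (Sig : R) (x : A) :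
  (0 < #|A|)%N -> \sum_(t : A) metric_proximity Sig x t = Sig.
Proof.
move=> A_gt0; have n0 : #|A|%:R != 0 :> R by rewrite pnatr_eq0 -lt0n.
have sum_const (c : R) : \sum_(t : A) c = #|A|%:R * c.
  by rewrite sumr_const mulr_natl.
rewrite /metric_proximity !big_split /= !sumrN !sum_const sum_drow.
by rewrite -(mulr_drow x n0); field.
Qed.

Hypothesis d_metric : is_metric d.

Lemma metric_diag (x : A) : d x x = 0.
Proof. exact/(proj1 (d_metric x x x)). Qed.

Lemma metric_ge0 (x y : A) : 0 <= d x y.
Proof. by have := proj2 (d_metric x y y); rewrite metric_diag; lra. Qed.

Lemma metric_gt0 (x y : A) : x <> y -> 0 < d x y.
Proof.
move=> xy; rewrite lt0r metric_ge0 andbT.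
by apply/eqP => /(proj1 (d_metric x y x)).
Qed.

End MetricProximity.

Theorem proposition2 (R : realType) (A : finType) (Sig : R) (d : A -> A -> R) :
  (0 < #|A|)%N ->
  is_metric d ->
  is_proximity Sig
    (fun x y => drow d x + drow d y - d x y - dall d + Sig / #|A|%:R).
Proof.
move=> A_gt0 d_metric x y z.
have defect := metric_proximity_defect d Sig x y.
have triangle := proj2 (d_metric x y z).
split; first exact: sum_metric_proximity.
split; first by have := defect z; rewrite /= (metric_diag d_metric); lra.
move=> -> xy; have := defect y; have := metric_gt0 d_metric xy.
by rewrite /= !(metric_diag d_metric); lra.
Qed.
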